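(* Let $\varphi$ be an increasing concave function on $[0,1]$ with $\varphi(0)=0$, $\varphi(1)=1$ and $\lim_{t\to0}\varphi(t)/t=\infty$. Then there is a function $f\in\varLambda_\varphi$ with $\int_0^1f(t)\,dt\ne0$ such that $\|1-\lambda f\|_{\varLambda_\varphi}\ge1$ for every $\lambda\in\mathbb{R}$.
   Context: The Lorentz space $\varLambda_\varphi$ consists of measurable $x$ on $[0,1]$ with $\|x\|_{\varLambda_\varphi}=\int_0^1x^*(t)\,d\varphi(t)<\infty$, where $x^*$ is the decreasing right-continuous rearrangement of $|x|$; $1$ denotes the function identically equal to $1$ on $[0,1]$. *)

From HB Require Import structures.
From mathcomp Require Import all_boot all_order all_algebra.
From mathcomp Require Import all_classical all_reals all_analysis.
Set Implicit Arguments. Unset Strict Implicit. Unset Printing Implicit Defensive.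
Import Order.TTheory GRing.Theory Num.Theory.
Import numFieldNormedType.Exports.
Local Open Scope classical_set_scope.
Local Open Scope ring_scope.
Local Open Scope ereal_scope.

Definition distrib (R : realType) (x : R -> R) (s : R) : \bar R :=
  (@lebesgue_measure R) ([set t | (0 <= t <= 1)%R /\ (s < `|x t|)%R]).

(* Decreasing right-continuous rearrangement of |x|:
   x*(t) = inf { s >= 0 : d_x(s) <= t }  (= +oo if the set is empty). *)
Definition rearr (R : realType) (x : R -> R) (t : R) : \bar R :=
  ereal_inf [set s%:E | s in [set s : R | (0 <= s)%R /\ distrib x s <= t%:E]].

(* Lorentz norm  ||x|| = \int_[0,1] x*(t) d(phi)(t), where mu is the
   Lebesgue--Stieltjes measure of phi on [0,1]. *)
Definition lorentz_norm (R : realType) (mu : {measure set (measurableTypeR R) -> \bar R})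
  (x : R -> R) : \bar R :=
  \int[mu]_(t in `[(0:R)%R, 1%R]%classic) rearr x t.

(* mu is the Lebesgue--Stieltjes measure of phi on [0,1]:
   mu([0,t]) = phi(t) for 0 < t <= 1 (the possible jump of phi at 0,
   i.e. phi(0+) > phi(0) = 0, becomes an atom at 0, as in the
   Stieltjes integral \int_0^1 x* dphi). *)
Definition stieltjes_of (R : realType) (mu : {measure set (measurableTypeR R) -> \bar R})
  (phi : R -> R) : Prop :=
  forall t : R, (0 < t <= 1)%R -> mu `[(0:R)%R, t]%classic = (phi t)%:E.

Definition in_lorentz (R : realType) (mu : {measure set (measurableTypeR R) -> \bar R})
  (x : R -> R) : Prop :=
  measurable_fun `[(0:R)%R, 1%R]%classic x /\ lorentz_norm mu x < +oo.

From HB Require Import structures.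
From mathcomp Require Import all_boot all_order all_algebra.
From mathcomp Require Import all_classical all_reals all_analysis.
From mathcomp Require Import measurable_realfun lra.
Set Implicit Arguments. Unset Strict Implicit. Unset Printing Implicit Defensive.
Import Order.TTheory GRing.Theory Num.Theory.
Import numFieldNormedType.Exports.
Local Open Scope classical_set_scope.
Local Open Scope ring_scope.

(* Concavity with phi 0 = 0 and phi 1 = 1 gives phi t >= t, so the Stieltjes
   measure of [0,1) is at least 1; hence if |g| >= v1 >= 0 on a set of Lebesgue
   measure > p and |g| >= v2 >= 0 on [0,1], then
   ||g|| >= v1 phi(p) + v2 (1 - phi p).
   Since phi t / t -> +oo, some p in (0,1) has c := phi p > p; take h strictly
   between p and c and f := 1_[0,h] - c, so that the integral of f is h - c <> 0.
   For l < 0 use v1 = 1 - l (1 - c) on [0,h], whose measure exceeds p, and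
   v2 = max (1 + l c) 0: the bound is at least
   (1 - l (1 - c)) c + (1 + l c) (1 - c) = 1.  For l >= 0 use v1 = 1 + l c on
   (h,1], whose measure exceeds q := 1 - (c + h) / 2, and
   v2 = max (1 - l (1 - c)) 0: since phi q >= q >= 1 - c the bound is at least
   1 + l (phi q - (1 - c)) >= 1. *)

(* Unlike [ge0_le_integral], no measurability is required, since the
   nonnegative integral is a supremum over simple minorants; the
   rearrangement is never shown to be measurable. *)
Lemma ge0_le_integral_sup d (T : measurableType d) (R : realType)
    (mu : {measure set T -> \bar R}) (D : set T) (f g : T -> \bar R) :
  (forall x, D x -> (0 <= f x)%E) -> (forall x, D x -> (f x <= g x)%E) ->
  (\int[mu]_(x in D) f x <= \int[mu]_(x in D) g x)%E.
Proof.
move=> f0 fg; rewrite ge0_integralE // ge0_integralE; last first.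
  by move=> x Dx; exact: le_trans (f0 x Dx) (fg x Dx).
apply: le_ereal_sup => _ [h hf <-]; exists h => //= x.
exact: le_trans (hf x) (lee_restrict fg x).
Qed.

Section scaled_indicator.
Context d (T : measurableType d) (R : realType) (mu : {measure set T -> \bar R}).
Variables (D C : set T) (w : R).
Hypotheses (mD : measurable D) (mC : measurable C).

Lemma measurable_fun_scaled_indic : measurable_fun D (fun t => (w * \1_C t)%:E).
Proof. by apply/measurable_EFinP/measurable_funM => //; exact: measurable_indic. Qed.

Lemma integral_scaled_indic : C `<=` D -> 0 <= w ->
  (\int[mu]_(t in D) (w * \1_C t)%:E = w%:E * mu C)%E.
Proof.
move=> CD w0; under eq_integral do rewrite EFinM.
rewrite ge0_integralZl_EFin ?integral_indic ?setIidl //.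
exact/measurable_EFinP/measurable_indic.
Qed.

End scaled_indicator.

Section rearrangement.
Variables (R : realType) (x : R -> R).

Lemma rearr_ge0 t : (0 <= rearr x t)%E.
Proof. by apply: le_ereal_inf_tmp => _ [s [s0 _] <-]; rewrite lee_fin. Qed.

Lemma rearr_ge (t v : R) (E : set R) : E `<=` `[0, 1] ->
  (forall y, E y -> v <= `|x y|) -> (t%:E < lebesgue_measure E)%E ->
  (v%:E <= rearr x t)%E.
Proof.
move=> E01 Ev tE; apply: le_ereal_inf_tmp => _ [s [_ dxs] <-].
rewrite lee_fin leNgt; apply/negP => sv.
have : (lebesgue_measure E <= distrib x s)%E.
  apply: le_outer_measure => y Ey; split; first by have := E01 y Ey; rewrite /= in_itv.
  exact: lt_le_trans sv (Ev y Ey).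
by move=> /le_trans /(_ dxs); rewrite leNgt tE.
Qed.

Lemma rearr_le (t v : R) : 0 <= t -> 0 <= v ->
  (forall y, 0 <= y <= 1 -> `|x y| <= v) -> (rearr x t <= v%:E)%E.
Proof.
move=> t0 v0 xv; apply: ereal_inf_lbound; exists v => //; split => //.
rewrite /distrib (_ : [set _ | _] = set0) ?measure0 ?lee_fin //.
by apply/seteqP; split => y //= [/xv xyv vy]; move: xyv; rewrite leNgt vy.
Qed.

End rearrangement.

Section stieltjes.
Variables (R : realType) (phi : R -> R) (mu : {measure set (measurableTypeR R) -> \bar R}).
Hypothesis mu_phi : stieltjes_of mu phi.
Hypothesis phi_ge_id : forall t, 0 < t < 1 -> t <= phi t.

Lemma measure_itv_co01_ge1 : (1 <= mu `[0%R, 1%R[%classic)%E.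
Proof.
apply/lee_mul01Pr => // r /andP[r0 r1]; rewrite mule1.
apply: (@le_trans _ _ (mu `[0%R, r]%classic)).
  by rewrite mu_phi ?lee_fin ?phi_ge_id ?r0 ?ltW.
apply: le_measure; rewrite ?inE; try exact: measurable_itv.
by apply: subset_itvl; rewrite bnd_simp.
Qed.

Lemma measure_itv_oo1_ge (p : R) : 0 < p < 1 -> ((1 - phi p)%:E <= mu `]p, 1%R[%classic)%E.
Proof.
move=> /andP[p0 p1].
have : (1 <= mu `[0%R, p]%classic + mu `]p, 1%R[%classic)%E.
  rewrite -measureU; try exact: measurable_itv.
    by rewrite -itv_bndbnd_setU ?bnd_simp ?(ltW p0) //; exact: measure_itv_co01_ge1.
  by apply/seteqP; split=> y //= []; rewrite !in_itv /= => /andP[_ yp] /andP[py _]; lra.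
by rewrite mu_phi ?p0 ?(ltW p1) // EFinB -leeBlDl.
Qed.

Lemma lorentz_norm_ge_step (g : R -> R) (p v1 v2 : R) (E : set R) :
  0 < p < 1 -> E `<=` `[0%R, 1%R]%classic -> (p%:E < lebesgue_measure E)%E ->
  0 <= v1 -> 0 <= v2 ->
  (forall y, E y -> v1 <= `|g y|) -> (forall y, 0 <= y <= 1 -> v2 <= `|g y|) ->
  ((v1 * phi p + v2 * (1 - phi p))%:E <= lorentz_norm mu g)%E.
Proof.
move=> /andP[p0 p1] E01 pE v10 v20 gE gD.
pose D := `[0%R, 1%R]%classic : set R.
set A := `[0%R, p]%classic; set B := `]p, 1%R[%classic.
have [mD mA mB] : [/\ measurable D, measurable A & measurable B].
  by split; exact: measurable_itv.
have AD : A `<=` D by apply: subset_itvl; rewrite bnd_simp ltW.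
have BD : B `<=` D by apply: subset_itv; rewrite bnd_simp ?(ltW p0).
(* The step stops before 1 because rearr g 1 = 0; by [measure_itv_co01_ge1]
   this costs nothing. *)
pose step t := ((v1 * \1_A t)%:E + (v2 * \1_B t)%:E)%E.
have step_ge0 t : D t -> (0 <= step t)%E.
  by move=> _; rewrite adde_ge0 // lee_fin mulr_ge0.
have step_le_rearr t : D t -> (step t <= rearr g t)%E.
  rewrite /D /step /= in_itv /= => /andP[t0 t1].
  rewrite !indicE !mem_setE !in_itv /= t0 /=.
  have [tp|pt] := leP t p.
    rewrite mulr1 mulr0 adde0; apply: rearr_ge E01 gE _.
    by apply: le_lt_trans pE; rewrite lee_fin.
  rewrite mulr0 add0e; have [t1'|_] := ltP t 1; last by rewrite mulr0; exact: rearr_ge0.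
  rewrite mulr1; apply: (@rearr_ge _ _ _ _ D) => //.
  by rewrite lebesgue_measure_itv /= lte01 sube0 lte_fin.
have integral_step : (\int[mu]_(t in D) step t = (v1 * phi p)%:E + v2%:E * mu B)%E.
  rewrite ge0_integralD //; last 4 first.
  - by move=> t _; rewrite lee_fin mulr_ge0.
  - exact: measurable_fun_scaled_indic.
  - by move=> t _; rewrite lee_fin mulr_ge0.
  - exact: measurable_fun_scaled_indic.
  by rewrite !integral_scaled_indic // mu_phi ?p0 ?(ltW p1).
apply: le_trans (ge0_le_integral_sup mu step_ge0 step_le_rearr).
rewrite integral_step EFinD leeD2l // EFinM lee_wpmul2l ?lee_fin //.
by apply: measure_itv_oo1_ge; rewrite p0.
Qed.

End stieltjes.

Definition shifted_indic (R : realType) (h c t : R) : R := \1_`[0%R, h]%classic t - c.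

Section shifted_indicator.
Variables (R : realType) (h c : R).

Lemma shifted_indicE t : 0 <= t -> shifted_indic h c t = if t <= h then 1 - c else - c.
Proof.
move=> t0; rewrite /shifted_indic indicE mem_setE in_itv /= t0.
by case: (t <= h); rewrite ?sub0r.
Qed.

Lemma one_sub_shifted_indicE (l t : R) : 0 <= t ->
  1 - l * shifted_indic h c t = if t <= h then 1 - l * (1 - c) else 1 + l * c.
Proof. by move=> t0; rewrite shifted_indicE //; case: ifP; rewrite // mulrN opprK. Qed.

Lemma measurable_shifted_indic (D : set R) : measurable_fun D (shifted_indic h c).
Proof. by apply: measurable_funB => //; exact: measurable_indic. Qed.

Lemma integral_shifted_indic : 0 < h <= 1 ->
  (\int[lebesgue_measure]_(t in `[0%R, 1%R]%classic) (shifted_indic h c t)%:E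
    = (h - c)%:E)%E.
Proof.
move=> /andP[h0 h1]; pose D := `[0%R, 1%R]%classic : set R.
have mD : measurable D by exact: measurable_itv.
have lebD : lebesgue_measure D = 1%:E by rewrite lebesgue_measure_itv /= lte01 sube0.
have int_indic : lebesgue_measure.-integrable D (EFin \o \1_`[0%R, h]%classic).
  exact: integrableS (integrable_indic_itv 0 h true false).
have int_cst : lebesgue_measure.-integrable D (EFin \o cst c).
  apply/integrableP; split; first exact/measurable_EFinP/measurable_cst.
  rewrite (_ : (fun x => _) = cst `|c|%:E) // integral_cst //.
  by move: lebD => /= ->; rewrite mule1 ltry.
rewrite /shifted_indic; under eq_integral do rewrite EFinB.
rewrite integralB_EFin // integral_indic // setIidl; last first.
  by apply: subset_itvl; rewrite bnd_simp.
rewrite integral_cst //; move: lebD => /= ->.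
by rewrite mule1 lebesgue_measure_itv /= lte_fin h0 sube0.
Qed.

Lemma lorentz_norm_shifted_indic_lty (phi : R -> R)
    (mu : {measure set (measurableTypeR R) -> \bar R}) :
  stieltjes_of mu phi -> 0 <= h -> 0 <= c <= 1 ->
  (lorentz_norm mu (shifted_indic h c) < +oo)%E.
Proof.
move=> mu_phi h0 /andP[c0 c1].
apply: (@le_lt_trans _ _ (\int[mu]_(t in `[0%R, 1%R]%classic) (cst 1%:E) t)%E).
  apply: ge0_le_integral_sup => [t _|t]; first exact: rearr_ge0.
  rewrite /= in_itv /= => /andP[t0 _]; apply: rearr_le => // y /andP[y0 _].
  by rewrite shifted_indicE //; case: ifP => _; rewrite ?normrN ger0_norm; lra.
by rewrite integral_cst ?mu_phi ?ltr01 ?lexx ?mul1e ?ltry //; exact: measurable_itv.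
Qed.

End shifted_indicator.

Section one_sub_shifted_indicator.
Variables (R : realType) (phi : R -> R) (mu : {measure set (measurableTypeR R) -> \bar R}).
Hypothesis mu_phi : stieltjes_of mu phi.
Hypothesis phi_ge_id : forall t, 0 < t < 1 -> t <= phi t.
Hypothesis phi_le1 : forall t, 0 <= t <= 1 -> phi t <= 1.

Lemma lorentz_norm_one_sub_shifted_indic_ge1_nneg (h c l : R) :
  0 < h < c -> c <= 1 -> 0 <= l ->
  (1%:E <= lorentz_norm mu (fun t => (1 - l * shifted_indic h c t)%R))%E.
Proof.
move=> /andP[h0 hc] c1 l0; pose q := 1 - (c + h) / 2.
have q01 : 0 < q < 1 by rewrite /q; apply/andP; split; lra.
have phiq : 1 - c <= phi q by apply: le_trans (phi_ge_id q01); rewrite /q; lra.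
have phiq1 : phi q <= 1 by apply: phi_le1; case/andP: q01 => /ltW -> /ltW ->.
have E01 : `]h, 1%R]%classic `<=` `[0%R, 1%R]%classic.
  by apply: subset_itvr; rewrite bnd_simp; lra.
have qE : (q%:E < lebesgue_measure `]h, 1%R]%classic)%E.
  by rewrite lebesgue_measure_itv /= lte_fin ifT -?EFinD ?lte_fin /q; lra.
have gE y : `]h, 1%R]%classic y -> 1 + l * c <= `|1 - l * shifted_indic h c y|.
  rewrite /= in_itv /= => /andP[hy _]; rewrite one_sub_shifted_indicE; last lra.
  by rewrite ifF ?ler_norm //; apply/negbTE; rewrite -ltNge.
pose v2 := Num.max (1 - l * (1 - c)) 0.
have gD y : 0 <= y <= 1 -> v2 <= `|1 - l * shifted_indic h c y|.
  move=> /andP[y0 _]; rewrite one_sub_shifted_indicE // ge_max normr_ge0 andbT.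
  by case: ifP => _; apply: le_trans (ler_norm _); nra.
have [v2_ge v2_ge0] : 1 - l * (1 - c) <= v2 /\ 0 <= v2 by rewrite !le_max !lexx orbT.
clearbody v2.
apply: le_trans (lorentz_norm_ge_step mu_phi phi_ge_id q01 E01 qE _ v2_ge0 gE gD).
  rewrite lee_fin; nra.
nra.
Qed.

Lemma lorentz_norm_one_sub_shifted_indic_ge1_neg (p h l : R) :
  0 < p < 1 -> p < h <= 1 -> l < 0 ->
  (1%:E <= lorentz_norm mu (fun t => (1 - l * shifted_indic h (phi p) t)%R))%E.
Proof.
move=> p01 /andP[ph h1] l0; have /andP[p0 p1] := p01.
have c1 : phi p <= 1 by rewrite phi_le1 // !ltW.
have E01 : `[0%R, h]%classic `<=` `[0%R, 1%R]%classic by apply: subset_itvl.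
have pE : (p%:E < lebesgue_measure `[0%R, h]%classic)%E.
  by rewrite lebesgue_measure_itv /= lte_fin ifT ?sube0 ?lte_fin //; lra.
have gE y : `[0%R, h]%classic y ->
    1 - l * (1 - phi p) <= `|1 - l * shifted_indic h (phi p) y|.
  by rewrite /= in_itv /= => /andP[y0 yh]; rewrite one_sub_shifted_indicE // yh ler_norm.
pose v2 := Num.max (1 + l * phi p) 0.
have gD y : 0 <= y <= 1 -> v2 <= `|1 - l * shifted_indic h (phi p) y|.
  move=> /andP[y0 _]; rewrite one_sub_shifted_indicE // ge_max normr_ge0 andbT.
  by case: ifP => _; apply: le_trans (ler_norm _); nra.
have [v2_ge v2_ge0] : 1 + l * phi p <= v2 /\ 0 <= v2 by rewrite !le_max !lexx orbT.
clearbody v2.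
apply: le_trans (lorentz_norm_ge_step mu_phi phi_ge_id p01 E01 pE _ v2_ge0 gE gD).
  rewrite lee_fin; nra.
nra.
Qed.

End one_sub_shifted_indicator.

Lemma concave_ge_id (R : numDomainType) (phi : R -> R) :
  (forall s t a : R, 0 <= s <= 1 -> 0 <= t <= 1 -> 0 <= a <= 1 ->
     (1 - a) * phi s + a * phi t <= phi ((1 - a) * s + a * t)) ->
  phi 0 = 0 -> phi 1 = 1 -> forall t, 0 <= t <= 1 -> t <= phi t.
Proof.
move=> conc phi0 phi1 t t01; have := conc 0 1 t.
by rewrite phi0 phi1 mulr0 add0r !mulr1 !lexx ler01; exact.
Qed.

Lemma exists_lt_phi (R : realType) (phi : R -> R) :
  (phi t / t) @[t --> 0^'+] --> +oo -> exists2 p, 0 < p < 1 & p < phi p.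
Proof.
move=> lim; have phi_gt_id : \forall t \near 0^'+, 1 < phi t / t.
  by have := (cvgryPgt (fun t => phi t / t)).1 lim; apply.
have : (0:R)^'+ ((fun t => 1 < phi t / t) `&` (fun t => 0 < t) `&` (fun t => t < 1)).
  apply: filterI; [apply: filterI|].
  - exact: phi_gt_id.
  - exact: nbhs_right_gt.
  - exact: nbhs_right_lt.
move=> /filter_ex[p [[p_phi p0] p1]].
by exists p; [rewrite p0 p1 | move: p_phi; rewrite ltr_pdivlMr // mul1r].
Qed.

Theorem corollary5 (R : realType) (phi : R -> R) :
  (forall s t : R, 0 <= s -> s <= t -> t <= 1 -> phi s <= phi t) ->
  (forall s t a : R, 0 <= s <= 1 -> 0 <= t <= 1 -> 0 <= a <= 1 ->
     (1 - a) * phi s + a * phi t <= phi ((1 - a) * s + a * t)) ->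
  phi 0 = 0 -> phi 1 = 1 ->
  (phi t / t) @[t --> 0^'+] --> +oo ->
  forall mu : {measure set (measurableTypeR R) -> \bar R}, stieltjes_of mu phi ->
  exists f : R -> R,
    in_lorentz mu f /\
    (\int[@lebesgue_measure R]_(t in `[(0:R)%R, 1%R]%classic) (f t)%:E != 0)%E /\
    forall l : R, (1%:E <= lorentz_norm mu (fun t => (1 - l * f t)%R))%E.
Proof.
move=> mono conc phi0 phi1 lim mu mu_phi.
have phi_ge_id t : 0 < t < 1 -> t <= phi t.
  by case/andP=> t0 t1; apply: concave_ge_id; rewrite // !ltW.
have phi_le1 t : 0 <= t <= 1 -> phi t <= 1 by case/andP=> t0 t1; rewrite -phi1 mono.
have [p p01 p_phi] := exists_lt_phi lim; have /andP[p0 p1] := p01.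
have c1 : phi p <= 1 by rewrite phi_le1 // !ltW.
pose h := (p + phi p) / 2.
have [h0 ph h_phi] : [/\ 0 < h, p < h & h < phi p] by rewrite /h; split; lra.
exists (shifted_indic h (phi p)); split; [split|split].
- exact: measurable_shifted_indic.
- apply: lorentz_norm_shifted_indic_lty mu_phi (ltW h0) _.
  by rewrite c1 andbT; lra.
- by rewrite integral_shifted_indic ?h0 ?eqe ?subr_eq0 ?lt_eqF //; lra.
- move=> l; have [l0|l0] := leP 0 l.
    by apply: (lorentz_norm_one_sub_shifted_indic_ge1_nneg mu_phi phi_ge_id phi_le1);
      rewrite ?h0 ?h_phi.
  by apply: (lorentz_norm_one_sub_shifted_indic_ge1_neg mu_phi phi_ge_id phi_le1);
    rewrite ?p01 ?ph //; lra.
Qed.
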